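(* Let $\varphi$ be a DBI normal formula and let $\theta$ be a formula that is independent of $\varphi$. Then for every pointed Kripke model $(\mathcal{M},v)$: $\mathcal{M},v\vDash\theta$ if and only if $\mathcal{M}\odot\mathcal{U}_\varphi,(v,0)\vDash\theta$.
   Context: Agents $\mathcal{A}=\{1,\dots,n\}$, $n>1$; language $\mathcal{L}$: $\varphi ::= p \mid \neg\varphi \mid (\varphi\wedge\varphi)\mid B_i\varphi$, $\top$ the usual tautology. Kripke model $\mathcal{M}=\langle S,R,V\rangle$ (nonempty $S$, $R_i\subseteq S\times S$, $V:\mathit{Prop}\to 2^S$), standard truth. Action model $\mathcal{U}=\langle E,Q,\mathsf{pre}\rangle$ (nonempty $E$, $Q_i\subseteq E\times E$, $\mathsf{pre}:E\to\mathcal{L}$). Pointed update of $(\mathcal{M},w)$ with $(\mathcal{U},\alpha)$, defined iff $\mathcal{M},w\vDash\mathsf{pre}(\alpha)$: with $T=\{(x,\beta)\in S\times E\mid\mathcal{M},x\vDash\mathsf{pre}(\beta)\}$, $\mathcal{M}\odot\mathcal{U}=\langle S^{\mathcal U},R^{\mathcal U},V^{\mathcal U}\rangle$ where $S^{\mathcal U}$ is the smallest subset of $T$ containing $(w,\alpha)$ closed under: $(x,\beta)\in S^{\mathcal U}$, $(u,\gamma)\in T$, $xR_iu$, $\beta Q_i\gamma$ imply $(u,\gamma)\in S^{\mathcal U}$; $R^{\mathcal U}_i$ relates $(x,\beta),(u,\gamma)\in S^{\mathcal U}$ iff $xR_iu$ and $\beta Q_i\gamma$; $V^{\mathcal U}(p)=\{(x,\beta)\in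 S^{\mathcal U}\mid x\in V(p)\}$. Target agents: $\mathsf{ta}(p)=\varnothing$, $\mathsf{ta}(\neg\phi)=\mathsf{ta}(\phi)$, $\mathsf{ta}(\phi\wedge\psi)=\mathsf{ta}(\phi)\cup\mathsf{ta}(\psi)$, $\mathsf{ta}(B_i\phi)=\{i\}$. DBI formulas: $\varphi ::= B_i\xi \mid B_i(\xi\wedge\varphi)\mid(\varphi\wedge\varphi)\mid B_i\varphi$, $\xi$ purely propositional. DBI normal: $B_i\xi$ always; $B_i\varphi$, $B_i(\xi\wedge\varphi)$ iff $\varphi$ DBI normal and $i\notin\mathsf{ta}(\varphi)$; $\varphi\wedge\psi$ iff both DBI normal and $\mathsf{ta}(\varphi)\cap\mathsf{ta}(\psi)=\varnothing$. Action model $\mathcal{U}_\varphi=\langle E^\varphi,Q^\varphi,\mathsf{pre}^\varphi\rangle$ for DBI normal $\varphi$, recursively; always $E^\varphi=\{0,-1\}\sqcup D^\varphi$, $\varnothing\ne D^\varphi\subseteq\{1,2,\dots\}$, $\mathsf{pre}^\varphi(0)=\mathsf{pre}^\varphi(-1)=\top$; $\underline{Q}_j$ denotes $Q_j\cap((E\setminus\{0\})\times(E\setminus\{0\}))$. (1) $\varphi=B_i\xi$: $D=\{m\}$, $\mathsf{pre}(m)=\xi$, $Q_j=\{(0,-1),(m,-1),(-1,-1)\}$ ($j\ne i$), $Q_i=\{(0,m),(m,m),(-1,-1)\}$. (2) $\varphi=B_i\psi$: fresh $m\ge1$, $m\notin D^\psi$; $D^\varphi=D^\psi\sqcup\{m\}$;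 $\mathsf{pre}^\varphi$ extends $\mathsf{pre}^\psi$ with $\mathsf{pre}^\varphi(m)=\top$; $Q^\varphi_j=\underline{Q}^\psi_j\cup\{(0,-1)\}\cup\{(m,k)\mid(0,k)\in Q^\psi_j\}$ ($j\ne i$); $Q^\varphi_i=\underline{Q}^\psi_i\cup\{(0,m),(m,m)\}$. (3) $\varphi=B_i(\xi\wedge\psi)$: as (2) but $\mathsf{pre}^\varphi(m)=\xi$. (4) $\varphi=\psi\wedge\theta$: with $D^\psi\cap D^\theta=\varnothing$, $D^\varphi=D^\psi\sqcup D^\theta$, $\mathsf{pre}^\varphi=\mathsf{pre}^\psi\cup\mathsf{pre}^\theta$, $Q^\varphi_j=\underline{Q}^\psi_j\cup\underline{Q}^\theta_j\cup\{(0,k)\mid(0,k)\in Q^\psi_j\cup Q^\theta_j, k\in D^\psi\sqcup D^\theta\}\cup\{(0,-1)\mid\text{no such }k\text{ exists}\}$. In $\mathcal{U}_\varphi$ every event has exactly one $Q^\varphi_j$-successor for each agent $j$. Independence: the modality sequences of a formula $\theta$ are the empty sequence together with, for each occurrence of a subformula $B_i\eta$ in $\theta$, the sequence $B_{i_1}\dots B_{i_k}$ of belief operators on the path from the root of the syntax tree of $\theta$ to that occurrence (so $i_k=i$). $\theta$ is in $\top$-shape w.r.t. event $\alpha_0\in E^\varphi$ iff for every modality sequence $B_{i_1}\dots B_{i_k}$ of $\theta$ ($k\ge0$), the unique events $\alpha_1,\dots,\alpha_k$ with $\alpha_0Q^\varphi_{i_1}\alpha_1Q^\varphi_{i_2}\alpha_2\cdots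 Q^\varphi_{i_k}\alpha_k$ satisfy $\mathsf{pre}^\varphi(\alpha_j)=\top$ for all $0\le j\le k$. $\theta$ is independent of $\varphi$ iff it is in $\top$-shape w.r.t. $0$. *)

From Stdlib Require Import ZArith List.
Open Scope Z_scope.

Definition agent (n : nat) : Type := { i : nat | (1 <= i <= n)%nat }.

Inductive form (A : Type) : Type :=
| Atom : nat -> form A
| Neg : form A -> form A
| And : form A -> form A -> form A
| Bel : A -> form A -> form A.
Arguments Atom {A} _.
Arguments Neg {A} _.
Arguments And {A} _ _.
Arguments Bel {A} _ _.

Definition Top {A : Type} : form A := Neg (And (Atom 0%nat) (Neg (Atom 0%nat))).

Record kripke (A : Type) := {
  st : Type;
  rel : A -> st -> st -> Prop;
  val : nat -> st -> Prop }.
Arguments st {A} _.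
Arguments rel {A} _ _ _ _.
Arguments val {A} _ _ _.

Fixpoint sat {A : Type} (M : kripke A) (w : st M) (f : form A) : Prop :=
  match f with
  | Atom p => val M p w
  | Neg g => ~ sat M w g
  | And g h => sat M w g /\ sat M w h
  | Bel i g => forall u, rel M i w u -> sat M u g
  end.

Record action_model (A : Type) := {
  ev : Type;
  aQ : A -> ev -> ev -> Prop;
  pre : ev -> form A }.
Arguments ev {A} _.
Arguments aQ {A} _ _ _ _.
Arguments pre {A} _ _.

Inductive InUpd {A : Type} (M : kripke A) (U : action_model A)
    (w : st M) (a : ev U) : st M * ev U -> Prop :=
| iu_base : InUpd M U w a (w, a)
| iu_step : forall i x b u c,
    InUpd M U w a (x, b) -> rel M i x u -> aQ U i b c -> sat M u (pre U c) ->
    InUpd M U w a (u, c).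

(* The pointed update M (.) U at (w, alpha) (used when M,w |= pre(alpha)). *)
Definition update {A : Type} (M : kripke A) (U : action_model A)
    (w : st M) (a : ev U) : kripke A := {|
  st := { p : st M * ev U | InUpd M U w a p };
  rel := fun i p q => rel M i (fst (proj1_sig p)) (fst (proj1_sig q)) /\
                      aQ U i (snd (proj1_sig p)) (snd (proj1_sig q));
  val := fun k p => val M k (fst (proj1_sig p)) |}.

Definition upd_point {A : Type} (M : kripke A) (U : action_model A)
    (w : st M) (a : ev U) : st (update M U w a) :=
  exist _ (w, a) (iu_base M U w a).

Fixpoint ta {A : Type} (f : form A) : A -> Prop :=
  match f with
  | Atom _ => fun _ => False
  | Neg g => ta g
  | And g h => fun i => ta g i \/ ta h i
  | Bel j _ => fun i => i = j
  end.

Fixpoint isprop {A : Type} (f : form A) : Prop :=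
  match f with
  | Atom _ => True
  | Neg g => isprop g
  | And g h => isprop g /\ isprop h
  | Bel _ _ => False
  end.

Fixpoint dbi_normal {A : Type} (f : form A) : Prop :=
  match f with
  | Bel i g =>
      isprop g
      \/ (dbi_normal g /\ ~ ta g i)
      \/ match g with
         | And xi h => isprop xi /\ dbi_normal h /\ ~ ta h i
         | _ => False
         end
  | And g h => dbi_normal g /\ dbi_normal h /\ (forall i, ~ (ta g i /\ ta h i))
  | _ => False
  end.

(* The action model U_phi, described on integer events:
   E = {0, -1} u D, D a set of positive integers, Q_j relations on Z,
   pre a function Z -> form (only its values on E matter).
   IsU phi D Q pre  <->  (D, Q, pre) is a valid outcome of the recursive
   construction of U_phi (for any admissible choice of fresh events). *)
Definition ul {A : Type} (Q : A -> Z -> Z -> Prop) (j : A) (x y : Z) : Prop :=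
  Q j x y /\ x <> 0 /\ y <> 0.

Inductive IsU {A : Type} : form A -> (Z -> Prop) -> (A -> Z -> Z -> Prop) ->
    (Z -> form A) -> Prop :=
| IsU1 : forall i xi m D Q p,
    isprop xi -> 1 <= m ->
    (forall z, D z <-> z = m) ->
    p 0 = Top -> p (-1) = Top -> p m = xi ->
    (forall j x y, j <> i ->
       (Q j x y <-> (x = 0 /\ y = -1) \/ (x = m /\ y = -1) \/ (x = -1 /\ y = -1))) ->
    (forall x y,
       Q i x y <-> (x = 0 /\ y = m) \/ (x = m /\ y = m) \/ (x = -1 /\ y = -1)) ->
    IsU (Bel i xi) D Q p
| IsU2 : forall i psi m Dp Qp pp D Q p,
    IsU psi Dp Qp pp ->
    1 <= m -> ~ Dp m ->
    (forall z, D z <-> Dp z \/ z = m) ->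
    p 0 = Top -> p (-1) = Top -> (forall z, Dp z -> p z = pp z) -> p m = Top ->
    (forall j x y, j <> i ->
       (Q j x y <-> ul Qp j x y \/ (x = 0 /\ y = -1) \/ (x = m /\ Qp j 0 y))) ->
    (forall x y,
       Q i x y <-> ul Qp i x y \/ (x = 0 /\ y = m) \/ (x = m /\ y = m)) ->
    IsU (Bel i psi) D Q p
| IsU3 : forall i xi psi m Dp Qp pp D Q p,
    isprop xi ->
    IsU psi Dp Qp pp ->
    1 <= m -> ~ Dp m ->
    (forall z, D z <-> Dp z \/ z = m) ->
    p 0 = Top -> p (-1) = Top -> (forall z, Dp z -> p z = pp z) -> p m = xi ->
    (forall j x y, j <> i ->
       (Q j x y <-> ul Qp j x y \/ (x = 0 /\ y = -1) \/ (x = m /\ Qp j 0 y))) ->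
    (forall x y,
       Q i x y <-> ul Qp i x y \/ (x = 0 /\ y = m) \/ (x = m /\ y = m)) ->
    IsU (Bel i (And xi psi)) D Q p
| IsU4 : forall psi th Dp Qp pp Dt Qt pt D Q p,
    IsU psi Dp Qp pp -> IsU th Dt Qt pt ->
    (forall z, ~ (Dp z /\ Dt z)) ->
    (forall z, D z <-> Dp z \/ Dt z) ->
    p 0 = Top -> p (-1) = Top ->
    (forall z, Dp z -> p z = pp z) -> (forall z, Dt z -> p z = pt z) ->
    (forall j x y,
       Q j x y <-> ul Qp j x y \/ ul Qt j x y
                   \/ (x = 0 /\ (Qp j 0 y \/ Qt j 0 y) /\ (Dp y \/ Dt y))
                   \/ (x = 0 /\ y = -1 /\
                       ~ (exists k, (Qp j 0 k \/ Qt j 0 k) /\ (Dp k \/ Dt k)))) ->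
    IsU (And psi th) D Q p.

Definition evset (D : Z -> Prop) (z : Z) : Prop := z = 0 \/ z = -1 \/ D z.

Definition mkU {A : Type} (D : Z -> Prop) (Q : A -> Z -> Z -> Prop)
    (p : Z -> form A) : action_model A := {|
  ev := { z : Z | evset D z };
  aQ := fun i a b => Q i (proj1_sig a) (proj1_sig b);
  pre := fun a => p (proj1_sig a) |}.

Definition ev0 {A : Type} (D : Z -> Prop) (Q : A -> Z -> Z -> Prop)
    (p : Z -> form A) : ev (mkU D Q p) :=
  exist _ 0 (or_introl eq_refl).

Inductive modseq {A : Type} : form A -> list A -> Prop :=
| ms_nil : forall f, modseq f nil
| ms_neg : forall f s, modseq f s -> modseq (Neg f) s
| ms_andl : forall f g s, modseq f s -> modseq (And f g) s
| ms_andr : forall f g s, modseq g s -> modseq (And f g) s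
| ms_bel : forall i f s, modseq f s -> modseq (Bel i f) (i :: s).

Fixpoint top_chain {A : Type} (U : action_model A) (a0 : ev U) (s : list A) : Prop :=
  match s with
  | nil => pre U a0 = Top
  | i :: s' => pre U a0 = Top /\ forall a1, aQ U i a0 a1 -> top_chain U a1 s'
  end.

Definition top_shape {A : Type} (U : action_model A) (a0 : ev U) (th : form A) : Prop :=
  forall s, modseq th s -> top_chain U a0 s.

Definition independent {A : Type} (th : form A) (D : Z -> Prop)
    (Q : A -> Z -> Z -> Prop) (p : Z -> form A) : Prop :=
  top_shape (mkU D Q p) (ev0 D Q p) th.

(* Updating with an action model whose every event has, for every agent, at least
   one successor does not change the truth of a formula whose modality sequences
   only meet events with precondition Top: an i-successor u of x in M pairs with an
   i-successor event b of the current event, and since pre b = Top the pair (u, b)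
   survives in the update, so the accessible states of (x, a) project exactly onto
   those of x.  The construction of U_phi is serial in this sense; proving it by
   induction needs two side invariants: the new events are positive, and no
   relation ever points back to the event 0. *)

From Stdlib Require Import ZArith List Lia Classical.

Lemma sat_Top {A : Type} (M : kripke A) (w : st M) : sat M w Top.
Proof. simpl. tauto. Qed.

Section TopShape.

Variables (A : Type) (U : action_model A).

Lemma top_shape_pre (a : ev U) (th : form A) : top_shape U a th -> pre U a = Top.
Proof. intros H. exact (H nil (ms_nil th)). Qed.

Lemma top_shape_Neg (a : ev U) (g : form A) :
  top_shape U a (Neg g) -> top_shape U a g.
Proof. intros H s Hs. apply H. now constructor. Qed.

Lemma top_shape_And_l (a : ev U) (g h : form A) :
  top_shape U a (And g h) -> top_shape U a g.
Proof. intros H s Hs. apply H. now apply ms_andl. Qed.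

Lemma top_shape_And_r (a : ev U) (g h : form A) :
  top_shape U a (And g h) -> top_shape U a h.
Proof. intros H s Hs. apply H. now apply ms_andr. Qed.

Lemma top_shape_Bel (a b : ev U) (i : A) (g : form A) :
  top_shape U a (Bel i g) -> aQ U i a b -> top_shape U b g.
Proof. intros H Hab s Hs. exact (proj2 (H (i :: s) (ms_bel i g s Hs)) b Hab). Qed.

Definition serial : Prop := forall i (a : ev U), exists b, aQ U i a b.

Lemma sat_update_top_shape (HU : serial) (M : kripke A) (w : st M) (a0 : ev U) :
  forall (th : form A) (s : st (update M U w a0)),
  top_shape U (snd (proj1_sig s)) th ->
  (sat M (fst (proj1_sig s)) th <-> sat (update M U w a0) s th).
Proof.
  induction th as [k | g IH | g IHg h IHh | i g IH]; intros s Ht.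
  - simpl. tauto.
  - simpl. rewrite (IH s (top_shape_Neg _ _ Ht)). tauto.
  - simpl. rewrite (IHg s (top_shape_And_l _ _ _ Ht)), (IHh s (top_shape_And_r _ _ _ Ht)).
    tauto.
  - destruct s as [[x a] Hin]. simpl in *. split.
    + intros H [[u b] Hq] [Hr Hab]. simpl in *.
      apply (IH (exist _ (u, b) Hq)); simpl.
      * exact (top_shape_Bel _ _ _ _ Ht Hab).
      * now apply H.
    + intros H u Hr. destruct (HU i a) as [b Hab].
      pose proof (top_shape_Bel _ _ _ _ Ht Hab) as Hb.
      assert (Hq : InUpd M U w a0 (u, b)).
      { eapply iu_step; eauto. rewrite (top_shape_pre _ _ Hb). apply sat_Top. }
      apply (IH (exist _ (u, b) Hq)); [exact Hb |].
      apply H. simpl. auto.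
Qed.

End TopShape.

Arguments serial {A} U.

Definition serial_on {A : Type} (D : Z -> Prop) (Q : A -> Z -> Z -> Prop) : Prop :=
  forall j x, evset D x -> exists y, evset D y /\ Q j x y.

Lemma mkU_serial {A : Type} (D : Z -> Prop) (Q : A -> Z -> Z -> Prop) (p : Z -> form A) :
  serial_on D Q -> serial (mkU D Q p).
Proof.
  intros H i [x Hx]. destruct (H i x Hx) as [y [Hy Hxy]].
  now exists (exist _ y Hy).
Qed.

Section SerialStep.

Variables (A : Type) (Dp : Z -> Prop) (Qp : A -> Z -> Z -> Prop).
Hypotheses (Dp_pos : forall z, Dp z -> 1 <= z) (Qp_not_into0 : forall j x, ~ Qp j x 0)
  (Qp_serial : serial_on Dp Qp).

(* Away from 0 every event keeps an old successor, and that step survives the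
   restriction [ul] of the old relation. *)
Lemma serial_on_ul (j : A) (x : Z) :
  x = -1 \/ Dp x -> exists y, (y = -1 \/ Dp y) /\ ul Qp j x y.
Proof.
  intros Hx. destruct (Qp_serial j x) as [y [Hy Hxy]]; [unfold evset; tauto |].
  assert (y <> 0) by (intros ->; exact (Qp_not_into0 j x Hxy)).
  assert (x <> 0) by (destruct Hx as [-> | Hx]; [| apply Dp_pos in Hx]; lia).
  exists y. unfold evset, ul in *. tauto.
Qed.

(* The shape shared by cases (2) and (3) of the construction, with fresh event m. *)
Variables (i : A) (m : Z) (D : Z -> Prop) (Q : A -> Z -> Z -> Prop).
Hypotheses (Hm : 1 <= m) (HD : forall z, D z <-> Dp z \/ z = m)
  (HQj : forall j x y, j <> i ->
     (Q j x y <-> ul Qp j x y \/ (x = 0 /\ y = -1) \/ (x = m /\ Qp j 0 y)))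
  (HQi : forall x y, Q i x y <-> ul Qp i x y \/ (x = 0 /\ y = m) \/ (x = m /\ y = m)).

Lemma bel_step_pos (z : Z) : D z -> 1 <= z.
Proof. rewrite HD. intros [Hz | ->]; auto. Qed.

Lemma bel_step_not_into0 (j : A) (x : Z) : ~ Q j x 0.
Proof.
  destruct (classic (j = i)) as [-> | Hne].
  - rewrite HQi. unfold ul. lia.
  - rewrite (HQj _ _ _ Hne). unfold ul.
    intros [Hq | [Hq | [_ Hq]]]; [tauto | lia | exact (Qp_not_into0 _ _ Hq)].
Qed.

Lemma bel_step_serial : serial_on D Q.
Proof.
  assert (HDm : D m) by (apply HD; auto).
  assert (HDp : forall y, y = -1 \/ Dp y -> evset D y).
  { intros y [-> | Hy]; unfold evset; [auto | rewrite HD; auto]. }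
  intros j x Hx.
  assert (Hcases : x = 0 \/ x = m \/ x = -1 \/ Dp x).
  { unfold evset in Hx. rewrite HD in Hx. tauto. }
  destruct (classic (j = i)) as [-> | Hne].
  - destruct Hcases as [-> | [-> | Hx']].
    + exists m. split; [now right; right | apply HQi; auto].
    + exists m. split; [now right; right | apply HQi; auto].
    + destruct (serial_on_ul i x Hx') as [y [Hy Hxy]].
      exists y. split; [now apply HDp | apply HQi; auto].
  - destruct Hcases as [-> | [-> | Hx']].
    + exists (-1). split; [unfold evset; auto | apply HQj; auto].
    + destruct (Qp_serial j 0) as [y [Hy H0y]]; [now left |].
      exists y. split.
      * unfold evset in *. rewrite HD. tauto.
      * apply HQj; auto.
    + destruct (serial_on_ul j x Hx') as [y [Hy Hxy]].
      exists y. split; [now apply HDp | apply HQj; auto].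
Qed.

End SerialStep.

Lemma IsU_pos {A : Type} (phi : form A) (D : Z -> Prop) (Q : A -> Z -> Z -> Prop)
    (p : Z -> form A) :
  IsU phi D Q p -> forall z, D z -> 1 <= z.
Proof.
  induction 1; intros z Hz.
  - apply H1 in Hz. lia.
  - eapply bel_step_pos; eauto.
  - eapply bel_step_pos; eauto.
  - apply H2 in Hz. destruct Hz; auto.
Qed.

Lemma IsU_not_into0 {A : Type} (phi : form A) (D : Z -> Prop) (Q : A -> Z -> Z -> Prop)
    (p : Z -> form A) :
  IsU phi D Q p -> forall j x, ~ Q j x 0.
Proof.
  induction 1; intros j x.
  - destruct (classic (j = i)) as [-> | Hne].
    + rewrite H6. lia.
    + rewrite (H5 _ _ _ Hne). lia.
  - eapply bel_step_not_into0; eauto.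
  - eapply bel_step_not_into0; eauto.
  - rewrite H7. unfold ul.
    pose proof (IsU_pos _ _ _ _ H) as Hpos1. pose proof (IsU_pos _ _ _ _ H0) as Hpos2.
    intros [Hq | [Hq | [[_ [_ [Hd | Hd]]] | Hq]]];
      [tauto | tauto | apply Hpos1 in Hd; lia | apply Hpos2 in Hd; lia | lia].
Qed.

Lemma IsU_serial {A : Type} (phi : form A) (D : Z -> Prop) (Q : A -> Z -> Z -> Prop)
    (p : Z -> form A) :
  IsU phi D Q p -> serial_on D Q.
Proof.
  induction 1.
  - intros j x Hx. unfold evset in *. rewrite H1 in Hx.
    destruct (classic (j = i)) as [-> | Hne].
    + destruct (Z.eq_dec x (-1)) as [-> | Hx'].
      * exists (-1). rewrite H6. tauto.
      * exists m. rewrite H1, H6. intuition lia.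
    + exists (-1). rewrite (H5 _ _ _ Hne). intuition lia.
  - exact (bel_step_serial _ _ _ (IsU_pos _ _ _ _ H) (IsU_not_into0 _ _ _ _ H) IHIsU
             i m D Q H2 H7 H8).
  - exact (bel_step_serial _ _ _ (IsU_pos _ _ _ _ H0) (IsU_not_into0 _ _ _ _ H0) IHIsU
             i m D Q H3 H8 H9).
  - assert (HDp : forall y, y = -1 \/ Dp y \/ Dt y -> evset D y).
    { intros y Hy. unfold evset. rewrite H2. tauto. }
    intros j x Hx. unfold evset in Hx. rewrite H2 in Hx.
    destruct Hx as [-> | Hx].
    + destruct (classic (exists k, (Qp j 0 k \/ Qt j 0 k) /\ (Dp k \/ Dt k)))
        as [[k [Hk1 Hk2]] | Hnone].
      * exists k. split; [apply HDp; tauto | apply H7; tauto].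
      * exists (-1). split; [apply HDp; tauto | apply H7; tauto].
    + assert (Hx' : (x = -1 \/ Dp x) \/ (x = -1 \/ Dt x)) by tauto.
      destruct Hx' as [Hx' | Hx'].
      * destruct (serial_on_ul _ _ _ (IsU_pos _ _ _ _ H) (IsU_not_into0 _ _ _ _ H)
                    IHIsU1 j x Hx') as [y [Hy Hxy]].
        exists y. split; [apply HDp; tauto | apply H7; tauto].
      * destruct (serial_on_ul _ _ _ (IsU_pos _ _ _ _ H0) (IsU_not_into0 _ _ _ _ H0)
                    IHIsU2 j x Hx') as [y [Hy Hxy]].
        exists y. split; [apply HDp; tauto | apply H7; tauto].
Qed.

Theorem theorem5 (n : nat) (Hn : (1 < n)%nat)
  (phi theta : form (agent n))
  (D : Z -> Prop) (Q : agent n -> Z -> Z -> Prop) (p : Z -> form (agent n))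
  (Hnorm : dbi_normal phi) (HU : IsU phi D Q p)
  (Hind : independent theta D Q p)
  (M : kripke (agent n)) (v : st M) :
  sat M v theta <->
  sat (update M (mkU D Q p) v (ev0 D Q p)) (upd_point M (mkU D Q p) v (ev0 D Q p)) theta.
Proof.
  exact (sat_update_top_shape _ _ (mkU_serial D Q p (IsU_serial phi D Q p HU)) M v
           (ev0 D Q p) theta (upd_point M (mkU D Q p) v (ev0 D Q p)) Hind).
Qed.
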